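(* For every family $(\alpha_k)$ as below, $\mathrm{3SAT}^{\mathrm C}\in\mathrm{P}^*_{\mathrm{lsis}}$.
   Context: $\mathbb B=\{T,F\}$. Let $v_1,v_2,\dots$ be propositional variables. For $k\in\mathbb N$ let $d(k)=\binom{2k}{1}+\binom{2k}{2}+\binom{2k}{3}$, and let $L_k$ be the set of sets $L$ of literals from $\{v_1,\neg v_1,\dots,v_k,\neg v_k\}$ with $1\le |L|\le 3$. Let $(\alpha_k)_{k\in\mathbb N}$ be bijections $\alpha_k:[1,d(k)]\to L_k$ such that (i) for all $i$ and $j\in[1,d(i)]$, $\alpha_{i+1}(j)=\alpha_i(j)$; and (ii) the map $\alpha(i)=\alpha_k(i)$ for the least $k$ with $i\le d(k)$ is polynomial-time computable. For $n\in\mathbb N$ let $k$ be such that $d(k)\le n<d(k+1)$ and define $\mathrm{3SAT}^{\mathrm C}_n:\mathbb B^n\to\mathbb B$ by $\mathrm{3SAT}^{\mathrm C}_n(b_1,\dots,b_n)=T$ iff $\bigwedge_{i\in[1,d(k)],\,b_i=T}\bigvee\alpha_k(i)$ is satisfiable; $\mathrm{3SAT}^{\mathrm C}=(\mathrm{3SAT}^{\mathrm C}_n)_n$. A primitive instruction is one of: a plain basic instruction $a$, a positive test instruction $+a$, a negative test instruction $-a$, a forward jump instruction $\#l$ ($l\in\mathbb N$), or the termination instruction $!$. An instruction sequence is a finite nonempty sequence $X=u_1;\dots;u_k$ of primitive instructions; $|X|=k$. $\mathrm{SIS}_{br}$ is the set of instruction sequences all of whose basic instructions belong to $\{\mathrm{in}{:}i.\mathrm{get}: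 i\ge1\}\cup\{\mathrm{out}.\mathrm{set}{:}T\}\cup\{\mathrm{split}(\mathrm{par}{:}i),\mathrm{reply}(\mathrm{par}{:}i): i\ge1\}$, where $\mathrm{in}{:}i$, $\mathrm{out}$ name Boolean registers and $\mathrm{par}{:}i$ are Boolean parameters. Splitting execution of $X\in\mathrm{SIS}_{br}$ on input $b\in\mathbb B^n$ is a finite tree of branches; each branch has a counter (initially 1) and a partial assignment $\sigma$ of Boolean parameters (initially empty). A branch deadlocks if its counter exceeds $k$, if it reaches $\#0$, if it executes $\mathrm{in}{:}j.\mathrm{get}$ with $j>n$, if it executes $\mathrm{reply}(p)$ with $\sigma(p)$ undefined, or if it executes $\mathrm{split}(p)$ with $\sigma(p)$ defined. At position $i$: $!$ terminates the branch successfully; $\#l$ ($l>0$) moves the counter to $i+l$; for $u_i\in\{a,+a,-a\}$ the basic instruction $a$ yields reply $r$ ($\mathrm{in}{:}j.\mathrm{get}$ yields $b_j$; $\mathrm{out}.\mathrm{set}{:}T$ yields $T$; $\mathrm{reply}(p)$ yields $\sigma(p)$; $\mathrm{split}(p)$ with $\sigma(p)$ undefined replaces the branch by two branches, one with $r=T$ and assignment $\sigma\cup\{p\mapsto T\}$ and one with $r=F$ and assignment $\sigma\cup\{p\mapsto F\}$), and the counter becomes $i+1$ for $a$; for $+a$: $i+1$ if $r=T$, $i+2$ if $r=F$; for $-a$: $i+1$ if $r=F$, $i+2$ if $r=T$. $X$ splitting computes $f:\mathbb B^n\to\mathbb B$ if for every $b\in\mathbb B^n$, every branch terminates successfully, and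 $f(b)=T$ iff some branch executes $\mathrm{out}.\mathrm{set}{:}T$. $\mathrm{P}^*_{\mathrm{lsis}}$ is the class of Boolean function families $(f_n)_{n\in\mathbb N}$, $f_n:\mathbb B^n\to\mathbb B$, for which there is a polynomial $h$ such that for every $n$ some $X\in\mathrm{SIS}_{br}$ splitting computes $f_n$ with $|X|\le h(n)$. *)

From Stdlib Require Import ClassicalEpsilon.
From mathcomp Require Import all_boot.
Unset Printing Implicit Defensive.

Inductive basic :=
| In_get of nat
| Out_setT
| Split of nat
| Reply of nat.

Inductive prim :=
| Plain of basic
| PTest of basic
| NTest of basic
| Jump of nat
| Term.

Definition basic_ok (a : basic) : bool :=
  match a with
  | In_get i => 0 < i
  | Out_setT => true
  | Split i => 0 < i
  | Reply i => 0 < i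
  end.

Definition prim_ok (u : prim) : bool :=
  match u with
  | Plain a | PTest a | NTest a => basic_ok a
  | _ => true
  end.

(* X is an element of SIS_br: nonempty, all basic instructions from the
   allowed set (with indices i >= 1). Position i (1-based) of X is nth _ X i.-1. *)
Definition is_SIS_br (X : seq prim) : bool := (0 < size X) && all prim_ok X.

Definition assign := nat -> option bool.
Definition upd (s : assign) (p : nat) (r : bool) : assign :=
  fun q => if q == p then Some r else s q.

Definition next_pos (u : prim) (i : nat) (r : bool) : nat :=
  match u with
  | PTest _ => if r then i.+1 else i.+2
  | NTest _ => if r then i.+2 else i.+1
  | _ => i.+1
  end.

(* Splitting execution of X on input b (b_j = nth false b j.-1, n = size b),
   starting from the branch at counter i with partial assignment s, where
   [out] records whether out.set:T has already been executed on this branch.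
   Result: None  = some branch of the (sub)tree deadlocks (or fuel ran out);
           Some o = every branch terminates successfully, and o holds iff
                    some branch executes out.set:T. *)
Fixpoint exec (X : seq prim) (b : seq bool) (fuel i : nat) (s : assign)
         (out : bool) : option bool :=
  match fuel with
  | 0 => None
  | fuel'.+1 =>
    if (i == 0) || (size X < i) then None else
    let u := nth Term X i.-1 in
    let step (a : basic) :=
      match a with
      | In_get j =>
          if (0 < j) && (j <= size b)
          then exec X b fuel' (next_pos u i (nth false b j.-1)) s out
          else None
      | Out_setT => exec X b fuel' (next_pos u i true) s true
      | Reply p =>
          match s p with
          | Some r => exec X b fuel' (next_pos u i r) s out
          | None => None
          end
      | Split p =>
          match s p with
          | Some _ => None
          | None =>
              match exec X b fuel' (next_pos u i true) (upd s p true) out,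
                    exec X b fuel' (next_pos u i false) (upd s p false) out with
              | Some o1, Some o2 => Some (o1 || o2)
              | _, _ => None
              end
          end
      end in
    match u with
    | Term => Some out
    | Jump l => if l == 0 then None else exec X b fuel' (i + l) s out
    | Plain a => step a
    | PTest a => step a
    | NTest a => step a
    end
  end.

(* The counter strictly increases, so fuel |X|+1 is never exhausted. *)
Definition splitting_computes (X : seq prim) (n : nat)
           (f : n.-tuple bool -> bool) : Prop :=
  forall b : n.-tuple bool,
    exec X b (size X).+1 1 (fun _ => None) false = Some (f b).

(* Polynomials (with natural coefficients, w.l.o.g. for upper bounds). *)
Definition is_poly_nat (h : nat -> nat) : Prop :=
  exists cs : seq nat, forall n, h n = \sum_(i < size cs) nth 0 cs i * n ^ i.

Definition P_star_lsis (F : forall n : nat, n.-tuple bool -> bool) : Prop :=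
  exists h : nat -> nat, is_poly_nat h /\
    forall n : nat, exists X : seq prim,
      [/\ is_SIS_br X, splitting_computes X n (F n) & size X <= h n].

(* A literal (x, true) is v_x, (x, false) is ~ v_x.
   A clause (set of literals) is represented by a seq, up to =i. *)
Definition literal := (nat * bool)%type.
Definition clause := seq literal.

Definition dd (k : nat) : nat := 'C(2 * k, 1) + 'C(2 * k, 2) + 'C(2 * k, 3).

Definition in_Lk (k : nat) (L : clause) : Prop :=
  (all (fun l : literal => (0 < l.1) && (l.1 <= k)) L) /\
  (1 <= size (undup L) <= 3).

Definition alpha_family (alpha : nat -> nat -> clause) : Prop :=
  (forall k,
     (forall j, 1 <= j <= dd k -> in_Lk k (alpha k j)) /\
     (forall j1 j2, 1 <= j1 <= dd k -> 1 <= j2 <= dd k ->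
        alpha k j1 =i alpha k j2 -> j1 = j2) /\
     (forall L, in_Lk k L -> exists2 j, 1 <= j <= dd k & alpha k j =i L)) /\
  (forall i j, 1 <= j <= dd i -> alpha i.+1 j =i alpha i j).

(* The unique k with d(k) <= n < d(k+1). *)
Definition kof (n : nat) : nat := \max_(k < n.+1 | dd k <= n) k.

Definition lit_true (v : nat -> bool) (l : literal) : bool := v l.1 == l.2.

Definition clause_true (v : nat -> bool) (L : clause) : bool := has (lit_true v) L.

Definition threeSATC_prop (alpha : nat -> nat -> clause) (n : nat)
           (b : n.-tuple bool) : Prop :=
  let k := kof n in
  exists v : nat -> bool,
    forall i, 1 <= i <= dd k -> nth false (val b) (i.-1) -> clause_true v (alpha k i).

Definition threeSATC (alpha : nat -> nat -> clause) (n : nat)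
           (b : n.-tuple bool) : bool :=
  if excluded_middle_informative (threeSATC_prop alpha n b) then true else false.

From Pilot Require Import Defs.
From Stdlib Require Import ClassicalEpsilon FunctionalExtensionality.
From mathcomp Require Import all_boot zify.

Set Implicit Arguments.
Unset Strict Implicit.
Unset Printing Implicit Defensive.

(* Let k = kof n and D = d(k).  The program first executes split(par:1), ...,
   split(par:k), so that the 2^k branches carry all assignments w of the
   variables v_1..v_k.  Each branch then runs a "tester": for i = 1..D a block
   that reads in:i and, if b_i = T, checks that the clause alpha_k(i) holds
   under w (one reply test per literal), terminating without output as soon as
   a selected clause fails; a branch that survives all blocks executes
   out.set:T.  Hence some branch outputs T iff some w satisfies all selected
   clauses, i.e. iff 3SAT^C_n(b) = T. *)

(* The amount of fuel is irrelevant once it exceeds the remaining length of the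
   program, because the counter strictly increases. *)
Lemma exec_fuel X b f1 f2 i s out : size X < f1 + i -> size X < f2 + i ->
  exec X b f1 i s out = exec X b f2 i s out.
Proof.
elim: f1 f2 i s out => [|f1 IH] [|f2] i s out H1 H2 //=.
- by rewrite add0n in H1; rewrite H1 orbT.
- by rewrite add0n in H2; rewrite H2 orbT.
case: ifP => // _.
have E j s' o : i < j -> exec X b f1 j s' o = exec X b f2 j s' o.
  by move=> Hj; apply: IH; lia.
case: (nth Term X i.-1) => [a|a|a|l|] //=; last by case: eqP => // Hl; apply: E; lia.
all: case: a => [j||p|p] //=;
  [ case: ifP => // _; case: (nth false b j.-1)
  |
  | case: (s p) => [|] //
  | case: (s p) => [[]|] // ].
all: by rewrite !E.
Qed.

(* [run X b q] executes [X] from the instruction at 0-based index [q] with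
   enough fuel. *)
Definition run (X : seq prim) (b : seq bool) (q : nat) (s : assign) (out : bool) :=
  exec X b (size X).+1 q.+1 s out.
Arguments run : simpl never.

Lemma exec_size X b j s out : exec X b (size X) j.+1 s out = run X b j s out.
Proof. by apply: exec_fuel; lia. Qed.

Definition code_at (X : seq prim) (q : nat) (Y : seq prim) : Prop :=
  exists R, drop q X = Y ++ R.

Lemma code_at_cat X q Y Z :
  code_at X q (Y ++ Z) -> code_at X q Y /\ code_at X (q + size Y) Z.
Proof.
case=> R HR; split; first by exists (Z ++ R); rewrite HR catA.
by exists R; rewrite addnC -drop_drop HR -catA drop_size_cat.
Qed.

Lemma code_at_cons X q u Y : code_at X q (u :: Y) -> code_at X q [:: u] /\ code_at X q.+1 Y.
Proof. by move/(@code_at_cat X q [:: u] Y); rewrite addn1. Qed.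

Lemma code_at1 X q u : code_at X q [:: u] -> q < size X /\ nth Term X q = u.
Proof.
case=> R HR; split; last by rewrite -[q]addn0 -nth_drop HR.
by rewrite ltnNge; apply/negP => Hq; move: HR; rewrite drop_oversize.
Qed.

(* The literal test for [l]: continue with the next instruction iff [l] holds
   under the current parameter assignment, otherwise skip one instruction. *)
Definition lit_test (l : literal) : prim :=
  if l.2 then PTest (Reply l.1) else NTest (Reply l.1).

Section Steps.
Variables (X : seq prim) (b : seq bool) (q : nat) (s : assign) (out : bool).

Lemma run_term : code_at X q [:: Term] -> run X b q s out = Some out.
Proof. by case/code_at1 => Hq Hu; rewrite [LHS]/run /= ltnNge Hq /= Hu. Qed.

Lemma run_out : code_at X q [:: Plain Out_setT] -> run X b q s out = run X b q.+1 s true.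
Proof. by case/code_at1 => Hq Hu; rewrite [LHS]/run /= ltnNge Hq /= Hu /= exec_size. Qed.

Lemma run_jump l : code_at X q [:: Jump l] -> 0 < l -> run X b q s out = run X b (q + l) s out.
Proof.
case/code_at1 => Hq Hu Hl.
by rewrite [LHS]/run /= ltnNge Hq /= Hu /= eqn0Ngt Hl addSn exec_size.
Qed.

Lemma run_guard j : code_at X q [:: NTest (In_get j)] -> 0 < j <= size b ->
  run X b q s out = run X b (if nth false b j.-1 then q.+2 else q.+1) s out.
Proof.
case/code_at1 => Hq Hu Hj; rewrite [LHS]/run /= ltnNge Hq /= Hu /= Hj.
by case: (nth false b j.-1); rewrite exec_size.
Qed.

Lemma run_lit_test l r : code_at X q [:: lit_test l] -> s l.1 = Some r ->
  run X b q s out = run X b (if r == l.2 then q.+1 else q.+2) s out.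
Proof.
rewrite /lit_test; case: l.2 => /code_at1 [Hq Hu] Hr;
  rewrite [LHS]/run /= ltnNge Hq /= Hu /= Hr; by case: r {Hr}; rewrite exec_size.
Qed.

Lemma run_split p : code_at X q [:: Plain (Defs.Split p)] -> s p = None ->
  run X b q s out =
  match run X b q.+1 (upd s p true) out, run X b q.+1 (upd s p false) out with
  | Some o1, Some o2 => Some (o1 || o2)
  | _, _ => None
  end.
Proof.
by case/code_at1 => Hq Hu Hp; rewrite [LHS]/run /= ltnNge Hq /= Hu /= Hp !exec_size.
Qed.
End Steps.

Definition litsat (s : assign) (l : literal) : bool := s l.1 == Some l.2.

(* The tests of the literals of [c]; a satisfied literal jumps over the
   remaining tests and over the instruction that follows them. *)
Fixpoint lits (c : clause) : seq prim :=
  if c is l :: c' then lit_test l :: Jump (2 * size c' + 2) :: lits c' else [::].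

Lemma size_lits c : size (lits c) = 2 * size c.
Proof. by elim: c => //= l c ->; lia. Qed.

Lemma run_lits X b c q s out : code_at X q (lits c) -> {in c, forall l, s l.1 != None} ->
  run X b q s out =
  run X b (if has (litsat s) c then (q + 2 * size c).+1 else q + 2 * size c) s out.
Proof.
elim: c q => [|l c IH] q /= Hc Hdef; first by rewrite muln0 addn0.
have [Htest /code_at_cons [Hjump Hrest]] := code_at_cons Hc.
have := Hdef l (mem_head _ _); case Hr: (s l.1) => [r|] // _.
have Hlit : litsat s l = (r == l.2) by rewrite /litsat Hr; apply/eqP/eqP => [[]|->].
rewrite (run_lit_test b out Htest Hr) /= Hlit; case: eqP => _ /=.
  by rewrite (run_jump b s out Hjump) //; f_equal; lia.
rewrite (IH _ Hrest) => [|l' Hl']; last by apply: Hdef; rewrite inE Hl' orbT.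
by case: has; f_equal; lia.
Qed.

(* Block for clause [c] guarded by input [i]: if [b_i = F] skip the block,
   otherwise test [c] and terminate (without output) if it fails. *)
Definition block (i : nat) (c : clause) : seq prim :=
  NTest (In_get i) :: Jump (2 * size c + 2) :: lits c ++ [:: Term].

Lemma size_block i c : size (block i c) = (2 * size c).+3.
Proof. by rewrite /block /= size_cat size_lits addn1. Qed.

Lemma run_block X b i c q s out :
  code_at X q (block i c) -> 0 < i <= size b -> {in c, forall l, s l.1 != None} ->
  run X b q s out =
  if nth false b i.-1 ==> has (litsat s) c then run X b (q + size (block i c)) s out
  else Some out.
Proof.
move=> /code_at_cons [Hguard /code_at_cons [Hskip /code_at_cat [Hlits Hreject]]] Hi Hdef.
rewrite size_block (run_guard s out Hguard Hi).
case: (nth false b i.-1) => /=; last by rewrite (run_jump b s out Hskip) //; f_equal; lia.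
rewrite (run_lits b out Hlits Hdef); case: has; first by f_equal; lia.
by rewrite size_lits in Hreject; rewrite (run_term b s out Hreject).
Qed.

Definition guarded_sat (b : seq bool) (cs : seq (nat * clause)) (s : assign) : bool :=
  all (fun ic => nth false b ic.1.-1 ==> has (litsat s) ic.2) cs.

Fixpoint tester (cs : seq (nat * clause)) : seq prim :=
  if cs is ic :: cs' then block ic.1 ic.2 ++ tester cs' else [:: Plain Out_setT; Term].

(* Unfolding [tester] one block at a time, keeping the block folded. *)
Lemma tester_cons ic cs : tester (ic :: cs) = block ic.1 ic.2 ++ tester cs.
Proof. by []. Qed.

Lemma run_tester X b cs q s out : code_at X q (tester cs) ->
  (forall ic : nat * clause, ic \in cs ->
     0 < ic.1 <= size b /\ {in ic.2, forall l, s l.1 != None}) ->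
  run X b q s out = Some (out || guarded_sat b cs s).
Proof.
elim: cs q out => [|[i c] cs IH] q out.
  move=> /code_at_cons [Haccept Hstop] _.
  by rewrite (run_out b s out Haccept) (run_term b s true Hstop) orbT.
move=> /code_at_cat [Hblock Hrest] Hcs.
have [Hi Hdef] := Hcs _ (mem_head _ _).
rewrite (run_block out Hblock Hi Hdef) [guarded_sat _ _ _]/= -/(guarded_sat b cs s).
case: (_ ==> _); last by rewrite orbF.
by apply: IH => // ic Hic; apply: Hcs; rewrite inE Hic orbT.
Qed.

Definition splits (p m : nat) : seq prim := [seq Plain (Defs.Split x) | x <- iota p.+1 m].

Definition ext (s : assign) (p m : nat) (w : nat -> bool) : assign :=
  fun x => if p < x <= p + m then Some (w x) else s x.

Lemma ext0 s p w : ext s p 0 w = s.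
Proof.
apply: functional_extensionality => x; rewrite /ext addn0.
by case: ltnP => // Hx; rewrite leqNgt Hx.
Qed.

Lemma ext_upd s p m r w :
  ext (upd s p.+1 r) p.+1 m w = ext s p m.+1 (fun x => if x == p.+1 then r else w x).
Proof.
apply: functional_extensionality => x; rewrite /ext /upd addnS addSn.
by case: (ltngtP x p.+1) => [Hx|Hx|->] //=; rewrite ltnS leq_addr.
Qed.

Lemma run_splits X b p m cs q s :
  code_at X q (splits p m ++ tester cs) ->
  (forall ic : nat * clause, ic \in cs ->
     0 < ic.1 <= size b /\ {in ic.2, forall l, 0 < l.1 <= p + m}) ->
  (forall x, (s x != None) = (0 < x <= p)) ->
  exists2 o : bool, run X b q s false = Some o &
    o <-> exists w, guarded_sat b cs (ext s p m w).
Proof.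
elim: m p q s => [|m IH] p q s Hcode Hcs Hdef.
  exists (guarded_sat b cs s).
    rewrite (run_tester false Hcode) // => ic /Hcs [Hi Hvars]; split=> // l /Hvars.
    by rewrite Hdef addn0.
  by split=> [Hs|[w]]; [exists (fun=> false) | ]; rewrite ext0.
have [Hsplit Hrest] := code_at_cons Hcode.
have Hfree : s p.+1 = None by move: (Hdef p.+1); rewrite ltnn andbF; case: (s p.+1).
have Hbranch r : exists2 o : bool, run X b q.+1 (upd s p.+1 r) false = Some o &
    o <-> exists w, guarded_sat b cs (ext (upd s p.+1 r) p.+1 m w).
  apply: IH => // [ic /Hcs [Hi Hvars] | x].
    by split=> // l /Hvars; rewrite addSnnS.
  rewrite /upd; case: (x =P p.+1) => [->|/eqP Hx] /=; first by rewrite ltnSn.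
  by rewrite Hdef (leq_eqVlt x p.+1) ltnS (negbTE Hx).
have [oT HrunT HoT] := Hbranch true; have [oF HrunF HoF] := Hbranch false.
exists (oT || oF); first by rewrite (run_split b false Hsplit Hfree) HrunT HrunF.
split.
  by case/orP => [/HoT | /HoF] [w]; rewrite ext_upd => Hw; eexists; exact: Hw.
case=> w Hw; have Hext : ext s p m.+1 w = ext (upd s p.+1 (w p.+1)) p.+1 m w.
  rewrite ext_upd; congr ext; apply: functional_extensionality => x.
  by case: eqP => // ->.
rewrite Hext in Hw; apply/orP.
by case: (w p.+1) Hw => Hw; [left; apply/HoT | right; apply/HoF]; exists w.
Qed.

Definition empty_assign : assign := fun=> None.

Lemma litsat_ext k w l : 0 < l.1 <= k -> litsat (ext empty_assign 0 k w) l = lit_true w l.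
Proof. by move=> Hl; rewrite /litsat /ext add0n Hl. Qed.

Definition guarded_clauses (cls : nat -> clause) (D : nat) : seq (nat * clause) :=
  [seq (i, undup (cls i)) | i <- iota 1 D].

Lemma mem_guarded_clauses cls D ic :
  ic \in guarded_clauses cls D -> exists2 i, 0 < i <= D & ic = (i, undup (cls i)).
Proof. by case/mapP => i; rewrite mem_iota add1n ltnS => Hi ->; exists i. Qed.

Lemma sat_guarded_clauses b cls D k w :
  (forall i, 0 < i <= D -> {in cls i, forall l, 0 < l.1 <= k}) ->
  guarded_sat b (guarded_clauses cls D) (ext empty_assign 0 k w) <->
  (forall i, 0 < i <= D -> nth false b i.-1 -> clause_true w (cls i)).
Proof.
move=> Hvars.
have Hclause i : 0 < i <= D ->
    has (litsat (ext empty_assign 0 k w)) (undup (cls i)) = clause_true w (cls i).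
  by move=> Hi; rewrite has_undup; apply: eq_in_has => l /(Hvars i Hi) /litsat_ext.
rewrite /guarded_sat all_map; split.
  by move/allP => H i Hi Hb; rewrite -Hclause // (implyP (H i _)) // mem_iota add1n ltnS.
move=> H; apply/allP => i; rewrite mem_iota add1n ltnS => Hi /=.
by apply/implyP => Hb; rewrite Hclause // H.
Qed.

Definition sat_program (cls : nat -> clause) (k D : nat) : seq prim :=
  splits 0 k ++ tester (guarded_clauses cls D).

Lemma run_sat_program cls k D b :
  D <= size b -> (forall i, 0 < i <= D -> {in cls i, forall l, 0 < l.1 <= k}) ->
  exists2 o : bool, run (sat_program cls k D) b 0 empty_assign false = Some o &
    o <-> exists w, forall i, 0 < i <= D -> nth false b i.-1 -> clause_true w (cls i).
Proof.
move=> HD Hvars.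
have [|ic /mem_guarded_clauses [i Hi ->]|x|o Hrun Ho] :=
  @run_splits (sat_program cls k D) b 0 k (guarded_clauses cls D) 0 empty_assign.
- by exists [::]; rewrite drop0 cats0.
- split; first by case/andP: Hi => -> /leq_trans ->.
  by move=> l; rewrite mem_undup; apply: Hvars.
- by case: x.
exists o => //; rewrite Ho.
by split=> -[w Hw]; exists w; apply/(sat_guarded_clauses b w Hvars).
Qed.

(* Size bounds: each block for a clause of at most 3 literals has length <= 9. *)
Lemma size_tester (cs : seq (nat * clause)) :
  (forall ic : nat * clause, ic \in cs -> size ic.2 <= 3) ->
  size (tester cs) <= 2 + 9 * size cs.
Proof.
elim: cs => [|ic cs IH] Hcs //; rewrite tester_cons size_cat size_block [size (_ :: _)]/=.
have Hic := Hcs _ (mem_head _ _).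
have Hrest : size (tester cs) <= 2 + 9 * size cs.
  by apply: IH => ic' Hic'; apply: Hcs; rewrite inE Hic' orbT.
lia.
Qed.

Lemma size_sat_program cls k D : (forall i, 0 < i <= D -> size (undup (cls i)) <= 3) ->
  size (sat_program cls k D) <= k + 2 + 9 * D.
Proof.
move=> Hsize; rewrite size_cat size_map size_iota -addnA leq_add2l.
rewrite -[X in 9 * X](size_iota 1 D) -(size_map (fun i => (i, undup (cls i)))).
by apply: size_tester => ic /mem_guarded_clauses [i Hi ->]; apply: Hsize.
Qed.

Lemma prim_ok_lits c : {in c, forall l, 0 < l.1} -> all prim_ok (lits c).
Proof.
elim: c => //= l c IH Hc; rewrite IH ?andbT => [|l' Hl'].
  by rewrite /lit_test; case: l.2; rewrite /= Hc ?mem_head.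
by apply: Hc; rewrite inE Hl' orbT.
Qed.

Lemma prim_ok_tester (cs : seq (nat * clause)) :
  (forall ic : nat * clause, ic \in cs -> 0 < ic.1 /\ {in ic.2, forall l, 0 < l.1}) ->
  all prim_ok (tester cs).
Proof.
elim: cs => [|ic cs IH] Hcs //=; have [Hi Hvars] := Hcs _ (mem_head _ _).
rewrite all_cat IH => [|ic' Hic']; last by apply: Hcs; rewrite inE Hic' orbT.
by rewrite /= Hi all_cat prim_ok_lits.
Qed.

Lemma sat_program_SIS cls k D : (forall i, 0 < i <= D -> {in cls i, forall l, 0 < l.1}) ->
  is_SIS_br (sat_program cls k D).
Proof.
move=> Hvars; rewrite /is_SIS_br size_cat all_cat; apply/and3P; split.
- by case: (guarded_clauses cls D) => [|ic cs]; rewrite ?size_cat ?size_block addnS.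
- by rewrite all_map; apply/allP => x; rewrite mem_iota => /andP [Hx _].
apply: prim_ok_tester => ic /mem_guarded_clauses [i Hi ->].
by split=> [|l]; [case/andP: Hi | rewrite mem_undup; apply: Hvars].
Qed.

Lemma leq_dd k : k <= dd k.
Proof. by rewrite /dd bin1; lia. Qed.

Lemma dd_kof n : dd (kof n) <= n.
Proof.
by apply: (big_ind (fun k => dd k <= n)) => // k k' Hk Hk'; rewrite /maxn; case: ifP.
Qed.

Lemma threeSATCP alpha n (b : n.-tuple bool) :
  reflect (threeSATC_prop alpha n b) (threeSATC alpha n b).
Proof. by rewrite /threeSATC; case: excluded_middle_informative => H; constructor. Qed.

Theorem theorem10 (alpha : nat -> nat -> clause) :
  alpha_family alpha -> P_star_lsis (threeSATC alpha).
Proof.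
case=> Halpha _; exists (fun n => 2 + 10 * n); split.
  by exists [:: 2; 10] => n; rewrite !big_ord_recr big_ord0 /= expn0 expn1 muln1.
move=> n; set k := kof n; set D := dd k.
have HDn : D <= n := dd_kof n.
have HkD : k <= D := leq_dd k.
have Hvars i : 0 < i <= D -> {in alpha k i, forall l, 0 < l.1 <= k}.
  by move=> /((Halpha k).1 i) [/allP Hl _] l /Hl.
have Hsize i : 0 < i <= D -> size (undup (alpha k i)) <= 3.
  by move=> /((Halpha k).1 i) [_ /andP []].
exists (sat_program (alpha k) k D); split.
- by apply: sat_program_SIS => i Hi l /(Hvars i Hi) /andP [].
- move=> b; have [|o Hrun Ho] := @run_sat_program (alpha k) k D b _ Hvars.
    by rewrite size_tuple.
  by rewrite [exec _ _ _ _ _ _]Hrun; congr Some; apply/idP/threeSATCP => /Ho.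
- by have := size_sat_program k Hsize; lia.
Qed.
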